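(* Let $X$ be an irreducible positive recurrent Markov chain on a countable state space $S$ with transition matrix $P$ and stationary distribution $\pi$. Let $K=\{z\}$ and let $A\supseteq K$ be a finite subset of $S$, $A'=A\setminus K$, $T_K=\inf\{n\ge1:X_n=z\}$, $T=\inf\{n\ge1:X_n\notin A\}$. Let $r:S\to[0,\infty)$ and suppose there are non-negative functions $g_1,g_2$ on $K^c$ and $h_1,h_2$ on $A$ such that for all $x\in K^c$ $$\sum_{y\in K^c}P(x,y)g_1(y)\le g_1(x)-r(x),\qquad \sum_{y\in K^c}P(x,y)g_2(y)\le g_2(x)-1,$$ and for all $x\in A$ and $i=1,2$, $\sum_{y\in A^c}P(x,y)g_i(y)\le h_i(x)$. Write $h_i=(h_{i1},h_{i2})$ for the restrictions to $K$ and $A'$ and set $\beta_i(z)=h_{i1}(z)+(P_{12}(I-P_{22})^{-1}h_{i2})(z)$. For non-negative $f$ let $\underline\kappa(z,f)=E_z\sum_{j=0}^{(T\wedge T_K)-1}f(X_j)$ and $\tilde\pi(f)=\underline\kappa(z,f)/\underline\kappa(z,e)$ with $e\equiv 1$, and let $\pi^*$ be the probability on $S$ given by $\pi^*(x)=\tilde\pi(e_x)$, where $e_x$ is the indicator of $\{x\}$. Then $$\|\pi^*-\pi\|_r\le 2\max\left(\frac{\beta_1(z)}{\underline\kappa(z,e)},\ \tilde\pi(r)\cdot\frac{\beta_2(z)}{\underline\kappa(z,e)}\right).$$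
   Context: $E_z$ is expectation for the chain started at $z$. $P$ is written in block form with respect to $(K,A',A^c)$; $P_{12}$ is the $K\times A'$ block and $P_{22}$ the $A'\times A'$ block (with $I-P_{22}$ invertible). The $r$-weighted total variation distance is $\|\mu-\pi\|_r=\sup_{|f|\le r}\left|\sum_{x\in S}\mu(x)f(x)-\sum_{x\in S}\pi(x)f(x)\right|$. When $K$ is a singleton, both the Perron–Frobenius and row-normalized approximations of the paper reduce to $\pi^*$. *)

From HB Require Import structures.
From mathcomp Require Import all_boot all_order all_algebra.
From mathcomp Require Import all_classical all_reals all_analysis.
Set Implicit Arguments. Unset Strict Implicit. Unset Printing Implicit Defensive.
Import Order.TTheory GRing.Theory Num.Theory.
Local Open Scope classical_set_scope.
Local Open Scope ring_scope.

Section MarkovDefs.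
Variables (R : realType) (S : countType).
Implicit Types (P : S -> S -> R).

Definition stochastic P : Prop :=
  (forall x y, 0 <= P x y) /\
  (forall x, (\esum_(y in [set: S]) (P x y)%:E = 1%E)).

Definition irreducible P : Prop :=
  forall x y : S, exists s : seq S,
    path (fun a b => 0 < P a b) x s && (last x s == y).

(* taboo probabilities u_n(y) = P_x(X_1 <> x, ..., X_n <> x, X_n = y) for
   n >= 1, and u_0 = delta_x *)
Fixpoint taboo P (x : S) (n : nat) (y : S) : \bar R :=
  match n with
  | 0 => (y == x)%:R%:E
  | n.+1 => if y == x then 0%E
            else \esum_(w in [set: S]) (taboo P x n w * (P w y)%:E)%E
  end.

(* E_x T_x = sum_{n >= 0} P_x(T_x > n), T_x = inf {n >= 1 : X_n = x} *)
Definition mean_return_time P (x : S) : \bar R :=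
  (\sum_(n <oo) \esum_(y in [set: S]) taboo P x n y)%E.

Definition positive_recurrent P : Prop :=
  forall x, (mean_return_time P x < +oo)%E.

Definition stationary P (pi : S -> R) : Prop :=
  (forall x, 0 <= pi x) /\
  (\esum_(x in [set: S]) (pi x)%:E = 1%E) /\
  (forall y, (pi y)%:E = \esum_(x in [set: S]) (pi x * P x y)%:E).

Definition ssum (a : S -> R) : \bar R :=
  (\esum_(x in [set: S]) (Num.max (a x) 0)%:E
   - \esum_(x in [set: S]) (Num.max (- a x) 0)%:E)%E.

Definition rnorm (mu nu r : S -> R) : \bar R :=
  ereal_sup [set `| (ssum (fun x => (mu x * f x)%R) - ssum (fun x => (nu x * f x)%R))%E |%E
            | f in [set f : S -> R | forall x, `|f x| <= r x]].

Definition Aprime (A : seq S) (z : S) : seq S := seq.filter (predC1 z) A.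

(* killed distribution: killed j y = P_z(X_j = y, X_1, ..., X_j in A'),
   i.e. P_z(X_j = y, j < T /\ T_K) ; supported in A *)
Fixpoint killed P (A : seq S) (z : S) (j : nat) (y : S) : R :=
  match j with
  | 0 => (y == z)%:R
  | j.+1 => (y \in Aprime A z)%:R *
            \sum_(x <- A) killed P A z j x * P x y
  end.

(* kappa_(z, f) = E_z sum_{j=0}^{(T /\ T_K) - 1} f(X_j)
               = sum_{j >= 0} E_z [ f(X_j) ; j < T /\ T_K ] *)
Definition kappa P (A : seq S) (z : S) (f : S -> R) : \bar R :=
  (\sum_(j <oo) (\sum_(x <- A) killed P A z j x * f x)%:E)%E.

Definition pitilde P A z (f : S -> R) : R :=
  fine (kappa P A z f) / fine (kappa P A z (fun _ => 1)).

Definition pistar P A z (x : S) : R :=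
  pitilde P A z (fun y => (y == x)%:R).

(* block matrices w.r.t. (K, A', A^c) ; A' enumerated by the list Aprime A z *)
Definition P22 P A z : 'M[R]_(size (Aprime A z)) :=
  \matrix_(i, j) P (nth z (Aprime A z) i) (nth z (Aprime A z) j).
Definition P12 P A z : 'rV[R]_(size (Aprime A z)) :=
  \row_j P z (nth z (Aprime A z) j).
Definition restrA' A z (h : S -> R) : 'cV[R]_(size (Aprime A z)) :=
  \col_i h (nth z (Aprime A z) i).

Definition beta P A z (h : S -> R) : R :=
  h z + (P12 P A z *m invmx (1%:M - P22 P A z) *m restrA' A z h) 0 0.

End MarkovDefs.

(* Let nu(y) be the expected number of visits to y during an excursion from z
   (times 0 <= n < T_z).  Since pi - pi(z) nu is nonnegative, subinvariant and
   vanishes at z, irreducibility gives pi = pi(z) nu, and pi(z) E_z T_z = 1.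
   Split each visit according to whether the chain has already left A:
   nu = lambda + rho, where lambda counts the visits before T /\ T_K, so that
   lambda(f) = kappa(z,f) and pi* = lambda / lambda(1), and rho counts those
   after the exit.  On A', lambda solves lambda = P12 + lambda P22, hence
   kappa(z,h) = beta(z) for h = (h(z), h|A').  Summing the drift inequality
   for g_i along the part of the excursion after the exit telescopes to
   rho(r) <= kappa(z,h_1) and rho(1) <= kappa(z,h_2).  Finally, for |f| <= r,
   pi*(f) = lambda(f) / lambda(1) and
   pi(f) = (lambda(f) + rho(f)) / (lambda(1) + rho(1)),
   and these two ratios differ by at most the claimed bound. *)

From HB Require Import structures.
From mathcomp Require Import all_boot all_order all_algebra.
From mathcomp Require Import all_classical all_reals all_analysis.
From mathcomp Require Import ring lra.
Import Order.TTheory GRing.Theory Num.Theory.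
Local Open Scope classical_set_scope.
Local Open Scope ring_scope.
Set Implicit Arguments. Unset Strict Implicit. Unset Printing Implicit Defensive.

Section esum_lemmas.
Context {R : realType} {T : choiceType}.
Local Open Scope ereal_scope.
Implicit Types (I : set T) (a : T -> \bar R).

Lemma esum_ge_term I a i : I i -> (forall j, I j -> 0 <= a j) ->
  a i <= \esum_(j in I) a j.
Proof.
move=> Ii a0; apply: esum_ge; exists [set i]; last by rewrite fsbig_set1.
by split; [exact: finite_set1 | move=> j ->].
Qed.

Lemma esumZl_EFin I a (c : R) : (0 <= c)%R -> (forall i, I i -> 0 <= a i) ->
  \esum_(i in I) (c%:E * a i) = c%:E * \esum_(i in I) a i.
Proof.
move=> c0 a0; rewrite /esum -ereal_supZl//; last first.
  by apply/set0P; exists 0; exists set0; [exact: fsets_set0 | rewrite fsbig_set0].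
have sumZ F : fsets I F -> \sum_(i \in F) (c%:E * a i) = c%:E * \sum_(i \in F) a i.
  case=> finF FI; rewrite !fsbig_finite//= big_seq [in RHS]big_seq.
  by rewrite ge0_sume_distrr// => i; rewrite in_fset_set// inE => /FI /a0.
congr ereal_sup; apply/seteqP; split => x /=.
  by move=> [F FI <-]; exists (\sum_(i \in F) a i); [exists F | rewrite sumZ].
by move=> [y [F FI <-] <-]; exists F => //; rewrite sumZ.
Qed.

Lemma esumZl I a (c : \bar R) : 0 <= c -> (forall i, I i -> 0 <= a i) ->
  \esum_(i in I) (c * a i) = c * \esum_(i in I) a i.
Proof.
case: c => [c| |] c0 a0; last by move: c0; rewrite leNgt ltNy0.
  exact: esumZl_EFin.
have [[i Ii ai]|a_le0] := pselect (exists2 i, I i & 0 < a i).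
  have esum_gt0 : 0 < \esum_(j in I) a j by rewrite (lt_le_trans ai)// esum_ge_term.
  rewrite gt0_mulye//; apply/eqP; rewrite eq_le leey /=.
  apply: le_trans (esum_ge_term (a := fun j => +oo * a j) Ii _).
    by rewrite gt0_mulye.
  by move=> j Ij; rewrite mule_ge0// a0.
have a_eq0 j : I j -> a j = 0.
  move=> Ij; apply/eqP; rewrite eq_le a0// andbT leNgt.
  by apply/negP => aj; apply: a_le0; exists j.
by rewrite !esum1 ?mule0// => j /a_eq0 ->; rewrite mule0.
Qed.

Lemma esumZr I a (c : \bar R) : 0 <= c -> (forall i, I i -> 0 <= a i) ->
  \esum_(i in I) (a i * c) = (\esum_(i in I) a i) * c.
Proof.
by move=> c0 a0; rewrite muleC -esumZl//; apply: eq_esum => i _; rewrite muleC.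
Qed.

Lemma esum_seq (s : seq T) a : uniq s ->
  (forall x, x \notin s -> a x = 0) -> (forall x, 0 <= a x) ->
  \esum_(x in [set: T]) a x = \sum_(x <- s) a x.
Proof.
move=> us a_out a0; rewrite (esumID [set` s])// [X in _ + X]esum1 ?adde0.
  by rewrite setTI esum_fset// -fsbig_seq.
by move=> x [_ /= xs]; apply: a_out; apply/negP.
Qed.

Lemma esumD1 a (t : T) : (forall x, 0 <= a x) ->
  \esum_(x in [set: T]) a x = a t + \esum_(x in [set~ t]) a x.
Proof. by move=> a0; rewrite (esumID [set t])// !setTI esum_set1. Qed.

Lemma esum_mkcondb (p : pred T) a :
  \esum_(i in [set i | p i]) a i = \esum_(i in [set: T]) if p i then a i else 0.
Proof. by rewrite esum_mkcond; apply: eq_esum => i _; rewrite mem_setE. Qed.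

End esum_lemmas.

Lemma exchange_esum {R : realType} {T1 T2 : choiceType} (I : set T1) (J : set T2)
  (a : T1 -> T2 -> \bar R) : (forall i j, I i -> J j -> (0 <= a i j)%E) ->
  \esum_(i in I) \esum_(j in J) a i j = \esum_(j in J) \esum_(i in I) a i j.
Proof.
move=> a0; rewrite (esum_esum (J := fun=> J))// (esum_esum (J := fun=> I)); last first.
  by move=> j i Jj Ii; exact: a0.
rewrite (reindex_esum (J `*`` (fun=> I)) _ (fun x => (x.2, x.1)))//; split=> //=.
- by move=> [i j] [/=].
- by move=> [i1 i2] [j1 j2] /= _ _ [] -> ->.
- by move=> [i1 i2] [Pi1 Qi2] /=; exists (i2, i1).
Qed.

Section nneseries_lemmas.
Context {R : realType}.
Local Open Scope ereal_scope.
Implicit Types (u : (\bar R)^nat).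

Lemma nneseries_le_ub u (M : \bar R) : (forall n, 0 <= u n) ->
  (forall N, \sum_(0 <= n < N) u n <= M) -> \sum_(n <oo) u n <= M.
Proof.
move=> u0 uM; apply: lime_le; first exact: is_cvg_nneseries.
by apply: nearW => N; exact: uM.
Qed.

Lemma nneseries_ge_cst_pinfty u (e : R) : (0 < e)%R -> (forall n, e%:E <= u n) ->
  \sum_(n <oo) u n = +oo.
Proof.
move=> e0 eu; have u0 n : 0 <= u n by rewrite (le_trans _ (eu n))// lee_fin ltW.
have partial_ge N : (N%:R * e)%:E <= \sum_(0 <= n < N) u n.
  elim: N => [|N IH]; first by rewrite big_geq// mul0r.
  by rewrite big_nat_recr//= -nat1r mulrDl mul1r addrC EFinD leeD.
apply/eqP; rewrite eq_le leey /= leNgt; apply/negP => series_fin.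
have series_ge0 : 0 <= \sum_(n <oo) u n by exact: nneseries_ge0.
set b := fine (\sum_(n <oo) u n).
have bE : \sum_(n <oo) u n = b%:E by rewrite /b fineK// ge0_fin_numE.
have : ((Num.truncn (b / e)).+1%:R * e <= b)%R.
  rewrite -lee_fin -bE (le_trans (partial_ge _))//.
  by apply: nneseries_lim_ge => n _ _.
by rewrite -ler_pdivlMr// leNgt truncnS_gt.
Qed.

End nneseries_lemmas.

Lemma perturbed_ratio_bound (R : realFieldType) (a d L D Lr B1 B2 : R) :
  0 < a -> 0 <= d -> d <= B2 -> `|L| <= Lr -> `|D| <= B1 ->
  `|L / a - (L + D) / (a + d)| <= 2 * Num.max (B1 / a) (Lr / a * (B2 / a)).
Proof.
move=> a0 d0 dB2 LLr DB1; have ad0 : 0 < a + d by rewrite ltr_wpDr.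
have a_ge0 := ltW a0; have ad_ge0 := ltW ad0.
have -> : L / a - (L + D) / (a + d) = L * (d / (a * (a + d))) - D / (a + d).
  by field; rewrite !gt_eqF.
have first_le : `|L * (d / (a * (a + d)))| <= Lr / a * (B2 / a).
  rewrite normrM [`|d / _|]ger0_norm ?divr_ge0 ?mulr_ge0//.
  have -> : Lr / a * (B2 / a) = Lr * (B2 / (a * a)) by rewrite invfM; ring.
  have ratio_le : d / (a * (a + d)) <= B2 / (a * a).
    apply: (@le_trans _ _ (d / (a * a))); last by rewrite ler_pM2r ?invr_gt0 ?mulr_gt0.
    by rewrite ler_wpM2l// lef_pV2 ?posrE ?mulr_gt0// ler_pM2l// lerDl.
  by apply: ler_pM => //; rewrite divr_ge0 ?mulr_ge0.
have second_le : `|D / (a + d)| <= B1 / a.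
  rewrite normrM [`|_^-1|]ger0_norm ?invr_ge0//.
  by apply: ler_pM; rewrite ?invr_ge0// lef_pV2 ?posrE// lerDl.
apply: (le_trans (ler_normB _ _)); set m := Num.max _ _.
have m1 : B1 / a <= m by rewrite le_max lexx.
have m2 : Lr / a * (B2 / a) <= m by rewrite le_max lexx orbT.
lra.
Qed.

Lemma ssum_ge0M (R : realType) (S : countType) (c f : S -> R) :
  (forall x, 0 <= c x) ->
  ssum (fun x => c x * f x) =
  (\esum_(x in [set: S]) (c x * f^\+ x)%:E - \esum_(x in [set: S]) (c x * f^\- x)%:E)%E.
Proof.
move=> c0; rewrite /ssum; congr (_ - _)%E; apply: eq_esum => x _.
  by rewrite /funrpos maxr_pMr// mulr0.
by rewrite /funrneg -mulrN maxr_pMr// mulr0.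
Qed.

Lemma irreducible_subinvariant_gt0 (R : realType) (S : countType)
    (P : S -> S -> R) (F : S -> R) {x y : S} :
  irreducible P -> (forall a b, F a * P a b <= F b) -> 0 < F x -> 0 < F y.
Proof.
move=> irr F_sub Fx; have [s /andP [xs_path /eqP s_last]] := irr x y.
elim: s x Fx xs_path s_last => [|a s IH] x Fx /=; first by move=> _ <-.
move=> /andP [Pxa as_path] s_last; apply: (IH a) => //.
by apply: lt_le_trans (F_sub x a); exact: mulr_gt0.
Qed.

Section excursion.
Variables (R : realType) (S : countType) (P : S -> S -> R) (z : S).
Hypothesis P_ge0 : forall x y, 0 <= P x y.
Hypothesis P_sum1 : forall x, (\esum_(y in [set: S]) (P x y)%:E = 1)%E.
Local Open Scope ereal_scope.
Local Notation tb := (taboo P z).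

Lemma taboo_ge0 n y : 0 <= tb n y.
Proof.
elim: n y => [|n IH] y /=; first by rewrite lee_fin ler0n.
by case: ifP => // _; apply: esum_ge0 => w _; rewrite mule_ge0 ?lee_fin.
Qed.

Lemma tabooP_ge0 n w y : 0 <= tb n w * (P w y)%:E.
Proof. by rewrite mule_ge0 ?taboo_ge0 ?lee_fin. Qed.

Lemma taboo_Sz n : tb n.+1 z = 0.
Proof. by rewrite /= eqxx. Qed.

Lemma taboo_S n y : y != z ->
  tb n.+1 y = \esum_(w in [set: S]) (tb n w * (P w y)%:E).
Proof. by move=> yz /=; rewrite (negbTE yz). Qed.

Definition occupation y : \bar R := \sum_(n <oo) tb n y.

Lemma occupation_ge0 y : 0 <= occupation y.
Proof. by apply: nneseries_ge0 => n _ _; exact: taboo_ge0. Qed.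

Lemma occupation_z : occupation z = 1.
Proof.
rewrite /occupation nneseries_recl//; last by move=> k _; exact: taboo_ge0.
by rewrite eseries0 ?adde0 /= ?eqxx// => -[|i] // _ _; rewrite taboo_Sz.
Qed.

Lemma esum_occupationM (c : S -> \bar R) : (forall y, 0 <= c y) ->
  \esum_(y in [set: S]) (occupation y * c y) =
  \sum_(n <oo) \esum_(y in [set: S]) (tb n y * c y).
Proof.
move=> c0; have tbc_ge0 n y : 0 <= tb n y * c y by rewrite mule_ge0 ?taboo_ge0.
rewrite nneseries_esumT => [|n]; last exact: esum_ge0.
rewrite exchange_esum => [|n y _ _]; last exact: tbc_ge0.
apply: eq_esum => y _; rewrite /occupation nneseries_esumT => [|n]; last exact: taboo_ge0.
by rewrite esumZr ?c0// => n _; exact: taboo_ge0.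
Qed.

Lemma esum_occupationP y :
  \esum_(w in [set: S]) (occupation w * (P w y)%:E) =
  \sum_(n <oo) \esum_(w in [set: S]) (tb n w * (P w y)%:E).
Proof. by rewrite esum_occupationM// => w; rewrite lee_fin. Qed.

Lemma occupation_invariant y : y != z ->
  \esum_(w in [set: S]) (occupation w * (P w y)%:E) = occupation y.
Proof.
move=> yz; rewrite esum_occupationP [in RHS]/occupation nneseries_recl//; last first.
  by move=> k _; exact: taboo_ge0.
rewrite /= (negbTE yz) add0e -(@nneseries_addn _ (fun k => tb k y) 1%N); last first.
  by move=> n; exact: taboo_ge0.
by apply: eq_eseriesr => n _; rewrite addn1 taboo_S.
Qed.

(* [survival n] is P_z(T_z > n) and [first_return n] is P_z(T_z = n + 1). *)
Definition survival n : \bar R := \esum_(y in [set: S]) tb n y.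

Definition first_return n : \bar R := \esum_(w in [set: S]) (tb n w * (P w z)%:E).

Lemma survival_ge0 n : 0 <= survival n.
Proof. by apply: esum_ge0 => y _; exact: taboo_ge0. Qed.

Lemma first_return_ge0 n : 0 <= first_return n.
Proof. by apply: esum_ge0 => w _; exact: tabooP_ge0. Qed.

Lemma survival_step n : first_return n + survival n.+1 = survival n.
Proof.
have mass_after_step : survival n =
    \esum_(y in [set: S]) \esum_(w in [set: S]) (tb n w * (P w y)%:E).
  rewrite exchange_esum; last by move=> *; exact: tabooP_ge0.
  apply: eq_esum => w _; rewrite esumZl ?taboo_ge0 ?P_sum1 ?mule1// => y _.
  by rewrite lee_fin.
rewrite mass_after_step /survival (esumD1 z (taboo_ge0 n.+1)) taboo_Sz add0e.
rewrite [RHS](esumD1 z); last by move=> y; apply: esum_ge0 => w _; exact: tabooP_ge0.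
congr (_ + _).
by apply: eq_esum => y /eqP yz; rewrite taboo_S.
Qed.

Lemma survival_partial N : \sum_(0 <= n < N) first_return n + survival N = 1.
Proof.
elim: N => [|N IH].
  rewrite big_geq// add0e /survival (esum_seq (s := [:: z]))//= ?big_seq1 ?eqxx//.
  by move=> x; rewrite inE => /negbTE ->.
by rewrite big_nat_recr//= -addeA survival_step.
Qed.

Lemma esum_occupation : \esum_(y in [set: S]) occupation y = mean_return_time P z.
Proof.
rewrite /mean_return_time nneseries_esumT; last by move=> n; exact: survival_ge0.
rewrite -exchange_esum; last by move=> *; exact: taboo_ge0.
apply: eq_esum => y _; rewrite /occupation nneseries_esumT// => n.
exact: taboo_ge0.
Qed.

Hypothesis finite_return : mean_return_time P z < +oo.

Lemma return_prob_ge1 : 1 <= \sum_(n <oo) first_return n.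
Proof.
(* Otherwise P_z(T_z > n) stays above 1 - P_z(T_z < oo) > 0 and E_z T_z = oo. *)
have ret_ge0 : 0 <= \sum_(n <oo) first_return n.
  by apply: nneseries_ge0 => n _ _; exact: first_return_ge0.
rewrite leNgt; apply/negP => ret_lt1.
set q := fine (\sum_(n <oo) first_return n).
have qE : \sum_(n <oo) first_return n = q%:E.
  by rewrite /q fineK// ge0_fin_numE// (lt_trans ret_lt1) ?ltry.
have survival_ge n : (1 - q)%:E <= survival n.
  have survival_fin : survival n \is a fin_num.
    rewrite ge0_fin_numE ?survival_ge0// (le_lt_trans _ (ltry 1))//.
    rewrite -(survival_partial n) leeDr// sume_ge0// => k _.
    exact: first_return_ge0.
  have : 1 <= q%:E + survival n.
    rewrite -(survival_partial n) leeD// -qE.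
    by apply: nneseries_lim_ge => k _ _; exact: first_return_ge0.
  by rewrite -(fineK survival_fin) -EFinD !lee_fin lerBlDl.
have : mean_return_time P z = +oo.
  by apply: (nneseries_ge_cst_pinfty _ survival_ge); rewrite subr_gt0 -lte_fin -qE.
by move=> ret_oo; move: finite_return; rewrite ret_oo ltxx.
Qed.

Lemma occupation_le_esumP y :
  occupation y <= \esum_(w in [set: S]) (occupation w * (P w y)%:E).
Proof.
have [->|yz] := eqVneq y z; last by rewrite occupation_invariant.
by rewrite occupation_z esum_occupationP; exact: return_prob_ge1.
Qed.

Section exit.
Variable A : seq S.
Hypothesis A_uniq : uniq A.
Hypothesis zA : z \in A.
Local Notation kl := (killed P A z).

Lemma mem_Aprime y : (y \in Aprime A z) = (y != z) && (y \in A).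
Proof. by rewrite mem_filter. Qed.

Lemma big_Aprime (V : Type) (idx : V) (op : Monoid.com_law idx) (F : S -> V) :
  \big[op/idx]_(x <- A) F x = op (F z) (\big[op/idx]_(x <- Aprime A z) F x).
Proof. by rewrite (bigD1_seq z)// /Aprime big_filter. Qed.

Lemma killed_ge0 n y : (0 <= kl n y)%R.
Proof.
elim: n y => [|n IH] y /=; first by rewrite ler0n.
by rewrite mulr_ge0 ?ler0n// sumr_ge0// => x _; rewrite mulr_ge0.
Qed.

Lemma killed_notin n y : y \notin A -> kl n y = 0%R.
Proof.
case: n => [|n] /= yA; last by rewrite mem_Aprime (negbTE yA) andbF mul0r.
by case: eqP => // yz; move: yA; rewrite yz zA.
Qed.

Lemma killed_Sz n : kl n.+1 z = 0%R.
Proof. by rewrite /= mem_Aprime eqxx mul0r. Qed.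

Lemma esum_killed n (F : S -> R) : (forall x, 0 <= F x)%R ->
  \esum_(w in [set: S]) (kl n w * F w)%:E = (\sum_(x <- A) kl n x * F x)%:E.
Proof.
move=> F0; rewrite (esum_seq A_uniq) ?sumEFin// => x.
  by move=> xA; rewrite killed_notin// mul0r.
by rewrite lee_fin mulr_ge0// killed_ge0.
Qed.

(* [escaped n y] is P_z(X_n = y, T <= n < T_z): the part of [taboo] carried by
   paths that have already left A. *)
Fixpoint escaped n y : \bar R :=
  match n with
  | 0 => 0
  | n.+1 => if y == z then 0 else
      \esum_(w in [set: S]) (escaped n w * (P w y)%:E) +
      ((y \notin A)%:R * \sum_(x <- A) kl n x * P x y)%:E
  end.

Lemma escaped_ge0 n y : 0 <= escaped n y.
Proof.
elim: n y => [|n IH] y //=; case: ifP => // _; apply: adde_ge0.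
  by apply: esum_ge0 => w _; rewrite mule_ge0 ?lee_fin.
rewrite lee_fin mulr_ge0 ?ler0n// sumr_ge0// => x _.
by rewrite mulr_ge0 ?killed_ge0.
Qed.

Lemma escapedM_ge0 n y c : (0 <= c)%R -> 0 <= escaped n y * c%:E.
Proof. by move=> c0; rewrite mule_ge0 ?escaped_ge0 ?lee_fin. Qed.

Lemma escaped_z n : escaped n z = 0.
Proof. by case: n => //= n; rewrite eqxx. Qed.

Lemma taboo_split n y : tb n y = (kl n y)%:E + escaped n y.
Proof.
elim: n y => [|n IH] y /=; first by rewrite adde0.
have [->|yz] := eqVneq y z; first by rewrite mem_Aprime eqxx mul0r adde0.
under eq_esum => w _ do rewrite IH ge0_muleDl ?escaped_ge0 ?lee_fin ?killed_ge0//.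
rewrite esumD; last 2 first.
- by move=> w _; rewrite mule_ge0 ?lee_fin ?killed_ge0.
- by move=> w _; rewrite mule_ge0 ?escaped_ge0 ?lee_fin.
under eq_esum => w _ do rewrite -EFinM.
rewrite esum_killed// mem_Aprime yz /=.
by case: (y \in A); rewrite /= ?mul1r ?mul0r ?adde0 ?add0e// addeC.
Qed.

Definition escaped_visits (f : S -> R) : \bar R :=
  \sum_(n <oo) \esum_(y in [set: S]) (escaped n y * (f y)%:E).

Lemma escaped_visits_ge0 f : (forall x, 0 <= f x)%R -> 0 <= escaped_visits f.
Proof.
move=> f0; apply: nneseries_ge0 => n _ _.
by apply: esum_ge0 => y _; exact: escapedM_ge0.
Qed.

Lemma le_escaped_visits (f g : S -> R) : (forall x, 0 <= f x)%R ->
  (forall x, f x <= g x)%R -> escaped_visits f <= escaped_visits g.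
Proof.
move=> f0 fg; apply: lee_nneseries.
  by move=> n _ _; apply: esum_ge0 => y _; exact: escapedM_ge0.
by move=> n _; apply: le_esum => y _; rewrite lee_wpmul2l ?escaped_ge0 ?lee_fin.
Qed.

Lemma escaped_visitsD (f g : S -> R) : (forall x, 0 <= f x)%R -> (forall x, 0 <= g x)%R ->
  escaped_visits (fun x => f x + g x)%R = escaped_visits f + escaped_visits g.
Proof.
move=> f0 g0; rewrite /escaped_visits -nneseriesD; last 2 first.
- by move=> n _ _; apply: esum_ge0 => y _; exact: escapedM_ge0.
- by move=> n _ _; apply: esum_ge0 => y _; exact: escapedM_ge0.
apply: eq_eseriesr => n _; rewrite -esumD; last 2 first.
- by move=> y _; exact: escapedM_ge0.
- by move=> y _; exact: escapedM_ge0.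
by apply: eq_esum => y _; rewrite EFinD ge0_muleDr ?lee_fin.
Qed.

Lemma esum_occupation_split (f : S -> R) : (forall x, 0 <= f x)%R ->
  \esum_(y in [set: S]) (occupation y * (f y)%:E) =
  kappa P A z f + escaped_visits f.
Proof.
move=> f0; rewrite esum_occupationM => [|y]; last by rewrite lee_fin.
rewrite /kappa -nneseriesD; last 2 first.
- move=> n _ _; rewrite lee_fin big_seq sumr_ge0// => x _.
  by rewrite mulr_ge0 ?killed_ge0.
- by move=> n _ _; apply: esum_ge0 => y _; exact: escapedM_ge0.
apply: eq_eseriesr => n _; rewrite -esum_killed// -esumD; last 2 first.
- by move=> y _; rewrite lee_fin mulr_ge0 ?killed_ge0.
- by move=> y _; exact: escapedM_ge0.
apply: eq_esum => y _; rewrite taboo_split EFinM.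
by rewrite ge0_muleDl ?lee_fin ?killed_ge0 ?escaped_ge0.
Qed.

Section lyapunov.
Variables (g rr h : S -> R).
Hypothesis g_ge0 : forall x, x != z -> (0 <= g x)%R.
Hypothesis rr_ge0 : forall x, (0 <= rr x)%R.
Hypothesis h_ge0 : forall x, x \in A -> (0 <= h x)%R.
Hypothesis drift : forall x, x != z ->
  \esum_(y in [set y | y != z]) (P x y * g y)%:E <= (g x - rr x)%:E.
Hypothesis exit_bound : forall x, x \in A ->
  \esum_(y in [set y | y \notin A]) (P x y * g y)%:E <= (h x)%:E.

Lemma drift_ge0 x : x != z -> (0 <= g x - rr x)%R.
Proof.
move=> xz; rewrite -lee_fin (le_trans _ (drift xz))// esum_ge0// => y /= yz.
by rewrite lee_fin mulr_ge0// g_ge0.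
Qed.

Lemma drift_step (m : S -> \bar R) : (forall w, 0 <= m w) -> m z = 0 ->
  \esum_(y in [set y | y != z]) \esum_(w in [set: S]) (m w * (P w y * g y)%:E)
  <= \esum_(w in [set: S]) (m w * (g w - rr w)%:E).
Proof.
move=> m0 mz; rewrite exchange_esum => [|y w /= yz _]; last first.
  by rewrite mule_ge0 ?lee_fin ?mulr_ge0 ?g_ge0.
apply: le_esum => w _; have [->|wz] := eqVneq w z.
  by rewrite mz mul0e esum1// => y _; rewrite mul0e.
rewrite esumZl// => [|y /= yz]; last by rewrite lee_fin mulr_ge0 ?g_ge0.
by rewrite lee_wpmul2l ?drift.
Qed.

Lemma exit_step (k : S -> R) : (forall x, x \in A -> 0 <= k x)%R ->
  \esum_(y in [set y | y \notin A]) ((\sum_(x <- A) k x * P x y) * g y)%:E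
  <= (\sum_(x <- A) k x * h x)%:E.
Proof.
move=> k0; have gA y : y \notin A -> (0 <= g y)%R.
  by move=> yA; apply: g_ge0; apply: contraNneq yA => ->.
rewrite (eq_esum (b := fun y => \sum_(x <- A | x \in A) (k x)%:E * (P x y * g y)%:E));
  last first.
  move=> y _; rewrite -big_seq mulr_suml -sumEFin.
  by apply: eq_bigr => x _; rewrite -EFinM mulrA.
rewrite esum_sum => [|y x /= yA xA]; last by rewrite mule_ge0 ?lee_fin ?mulr_ge0 ?k0 ?gA.
rewrite -sumEFin [leRHS]big_seq; apply: lee_sum => x xA.
rewrite esumZl ?lee_fin ?k0// => [|y /= yA]; last by rewrite lee_fin mulr_ge0 ?gA.
by rewrite EFinM lee_wpmul2l ?lee_fin ?k0 ?exit_bound.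
Qed.

Lemma escaped_g_ge0 n y : 0 <= escaped n y * (g y)%:E.
Proof.
have [->|yz] := eqVneq y z; first by rewrite escaped_z mul0e.
by rewrite escapedM_ge0 ?g_ge0.
Qed.

Lemma escaped_step N :
  \esum_(y in [set: S]) (escaped N.+1 y * (g y)%:E) +
  \esum_(y in [set: S]) (escaped N y * (rr y)%:E) <=
  \esum_(y in [set: S]) (escaped N y * (g y)%:E) + (\sum_(x <- A) kl N x * h x)%:E.
Proof.
(* The mass moved inside K^c is controlled by the drift of g, the mass that
   enters A^c from the killed chain by h. *)
have next_split : \esum_(y in [set: S]) (escaped N.+1 y * (g y)%:E) =
    \esum_(y in [set y | y != z]) \esum_(w in [set: S]) (escaped N w * (P w y * g y)%:E) +
    \esum_(y in [set y | y \notin A]) ((\sum_(x <- A) kl N x * P x y) * g y)%:E.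
  rewrite (esum_mkcondb (fun y => y != z)) (esum_mkcondb (fun y => y \notin A)).
  rewrite -esumD => [|y _|y _].
  - apply: eq_esum => y _.
    have [->|yz] := eqVneq y z; first by rewrite escaped_z mul0e zA add0e.
    rewrite [escaped N.+1 y]/= (negbTE yz) ge0_muleDl; first last.
    + by rewrite lee_fin mulr_ge0 ?ler0n ?sumr_ge0// => x _; rewrite mulr_ge0 ?killed_ge0.
    + by apply: esum_ge0 => w _; exact: escapedM_ge0.
    rewrite -esumZr ?lee_fin ?g_ge0//; last by move=> w _; exact: escapedM_ge0.
    under eq_esum do rewrite -muleA -EFinM.
    by case: (y \in A); rewrite /= ?mul0r ?mul1r ?mul0e ?adde0.
  - case: ifPn => // yz; apply: esum_ge0 => w _.
    by rewrite escapedM_ge0 ?mulr_ge0 ?g_ge0.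
  - case: ifPn => // yA.
    rewrite lee_fin mulr_ge0 ?g_ge0 ?sumr_ge0// => [x _|].
      by rewrite mulr_ge0 ?killed_ge0.
    by apply: contraNneq yA => ->.
have drift_split : \esum_(w in [set: S]) (escaped N w * (g w - rr w)%:E) +
    \esum_(y in [set: S]) (escaped N y * (rr y)%:E) =
    \esum_(y in [set: S]) (escaped N y * (g y)%:E).
  rewrite -esumD => [|w _|w _]; last exact: escapedM_ge0.
    apply: eq_esum => w _; have [->|wz] := eqVneq w z.
      by rewrite escaped_z !mul0e adde0.
    by rewrite -ge0_muleDr ?lee_fin ?drift_ge0// -EFinD subrK.
  have [->|wz] := eqVneq w z; first by rewrite escaped_z mul0e.
  by rewrite escapedM_ge0 ?drift_ge0.
rewrite next_split -drift_split addeAC; apply: leeD.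
  by apply: leeD => //; apply: drift_step; [exact: escaped_ge0 | exact: escaped_z].
by apply: exit_step => x _; exact: killed_ge0.
Qed.

Lemma escaped_visits_le : escaped_visits rr <= kappa P A z h.
Proof.
have partial_le N :
    \sum_(0 <= n < N) \esum_(y in [set: S]) (escaped n y * (rr y)%:E) +
    \esum_(y in [set: S]) (escaped N y * (g y)%:E) <=
    \sum_(0 <= n < N) (\sum_(x <- A) kl n x * h x)%:E.
  elim: N => [|N IH].
    by rewrite !big_geq// add0e esum1// => y _; rewrite mul0e.
  rewrite !big_nat_recr//= -addeA (addeC (esum _ _)).
  by apply: le_trans (leeD (lexx _) (escaped_step N)) _; rewrite addeA leeD.
apply: nneseries_le_ub => [n|N].
  by apply: esum_ge0 => y _; exact: escapedM_ge0.
apply: (@le_trans _ _ (\sum_(0 <= n < N) (\sum_(x <- A) kl n x * h x)%:E)).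
  apply: le_trans (partial_le N); rewrite leeDl// esum_ge0// => y _.
  exact: escaped_g_ge0.
apply: nneseries_lim_ge => n _ _; rewrite lee_fin big_seq sumr_ge0// => x xA.
by rewrite mulr_ge0 ?killed_ge0 ?h_ge0.
Qed.

End lyapunov.

Definition killed_occupation x : \bar R := \sum_(n <oo) (kl n x)%:E.

Lemma killed_occupation_ge0 x : 0 <= killed_occupation x.
Proof. by apply: nneseries_ge0 => n _ _; rewrite lee_fin killed_ge0. Qed.

Lemma killed_occupation_z : killed_occupation z = 1.
Proof.
rewrite /killed_occupation nneseries_recl//; last first.
  by move=> k _; rewrite lee_fin killed_ge0.
by rewrite eseries0 ?adde0 /= ?eqxx// => -[|i] // _ _; rewrite killed_Sz.
Qed.

Lemma kappa_killed_occupation (f : S -> R) : (forall x, x \in A -> 0 <= f x)%R ->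
  kappa P A z f = \sum_(x <- A) (f x)%:E * killed_occupation x.
Proof.
move=> f0; rewrite /kappa (eq_eseriesr (g := fun j =>
    \sum_(x <- A | x \in A) (kl j x * f x)%:E)) => [|j _]; last first.
  by rewrite -big_seq sumEFin.
rewrite nneseries_sum => [|x j xA]; last by rewrite lee_fin mulr_ge0 ?killed_ge0 ?f0.
rewrite big_seq; apply: eq_bigr => x xA.
rewrite /killed_occupation -nneseriesZl => [|n _]; last by rewrite lee_fin killed_ge0.
by apply: eq_eseriesr => n _; rewrite -EFinM mulrC.
Qed.

Lemma killed_occupation_rec y : y \in Aprime A z ->
  killed_occupation y =
  (P z y)%:E + \sum_(x <- Aprime A z) killed_occupation x * (P x y)%:E.
Proof.
move=> yA'; have yz : y != z by move: yA'; rewrite mem_Aprime => /andP[].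
rewrite /killed_occupation nneseries_recl//; last first.
  by move=> k _; rewrite lee_fin killed_ge0.
rewrite [kl 0 y]/= (negbTE yz) add0e.
rewrite -(@nneseries_addn _ (fun k => (kl k y)%:E) 1%N) => [|n]; last first.
  by rewrite lee_fin killed_ge0.
rewrite (eq_eseriesr (g := fun n => \sum_(x <- A) (kl n x * P x y)%:E)) => [|n _];
  last first.
  by rewrite addn1 /= yA' mul1r sumEFin.
rewrite nneseries_sum => [|x j _]; last by rewrite lee_fin mulr_ge0 ?killed_ge0.
rewrite (eq_bigr (fun x => killed_occupation x * (P x y)%:E)) => [|x _]; last first.
  rewrite /killed_occupation muleC -nneseriesZl => [|n _]; last first.
    by rewrite lee_fin killed_ge0.
  by apply: eq_eseriesr => n _; rewrite -EFinM mulrC.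
by rewrite big_Aprime killed_occupation_z mul1e.
Qed.

Lemma mean_return_split :
  mean_return_time P z = kappa P A z (fun=> 1%R) + escaped_visits (fun=> 1%R).
Proof.
rewrite -esum_occupation -esum_occupation_split//.
by apply: eq_esum => y _; rewrite mule1.
Qed.

Lemma killed_occupation_fin x : x \in A -> killed_occupation x \is a fin_num.
Proof.
move=> xA; rewrite ge0_fin_numE ?killed_occupation_ge0//.
apply: le_lt_trans finite_return; rewrite mean_return_split.
apply: (@le_trans _ _ (kappa P A z (fun=> 1%R))).
  rewrite kappa_killed_occupation// (bigD1_seq x)//= mul1e leeDl// sume_ge0// => y _.
  by rewrite mul1e killed_occupation_ge0.
by rewrite leeDl// (escaped_visits_ge0 (fun _ => ler01)).
Qed.

Definition lambda x : R := fine (killed_occupation x).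

Lemma lambda_ge0 x : (0 <= lambda x)%R.
Proof. by rewrite fine_ge0// killed_occupation_ge0. Qed.

Lemma lambdaE x : x \in A -> (lambda x)%:E = killed_occupation x.
Proof. by move=> xA; rewrite fineK// killed_occupation_fin. Qed.

Lemma kappa_lambda (f : S -> R) : (forall x, x \in A -> 0 <= f x)%R ->
  kappa P A z f = (\sum_(x <- A) f x * lambda x)%:E.
Proof.
move=> f0; rewrite kappa_killed_occupation// -sumEFin big_seq [RHS]big_seq.
by apply: eq_bigr => x xA; rewrite EFinM lambdaE.
Qed.

Lemma lambda_rec y : y \in Aprime A z ->
  lambda y = (P z y + \sum_(x <- Aprime A z) lambda x * P x y)%R.
Proof.
move=> yA'; have Aprime_sub x : x \in Aprime A z -> x \in A.
  by rewrite mem_Aprime => /andP[].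
apply: EFin_inj; rewrite lambdaE ?Aprime_sub// killed_occupation_rec// EFinD -sumEFin.
congr (_ + _); rewrite big_seq [RHS]big_seq; apply: eq_bigr => x xA'.
by rewrite EFinM lambdaE ?Aprime_sub.
Qed.

Definition lambda_row : 'rV[R]_(size (Aprime A z)) :=
  \row_i lambda (nth z (Aprime A z) i).

Lemma lambda_row_eq : (lambda_row *m (1%:M - P22 P A z) = P12 P A z)%R.
Proof.
rewrite mulmxBr mulmx1; apply/rowP => j; rewrite !mxE.
under eq_bigr do rewrite !mxE.
by rewrite (lambda_rec (mem_nth _ (ltn_ord j))) (big_nth z) big_mkord addrK.
Qed.

Hypothesis IP22_unit : (1%:M - P22 P A z)%R \in unitmx.

Lemma kappa_beta (h : S -> R) : (forall x, x \in A -> 0 <= h x)%R ->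
  kappa P A z h = (beta P A z h)%:E.
Proof.
move=> h0; rewrite kappa_lambda// big_Aprime /beta -lambda_row_eq mulmxK//.
rewrite (_ : lambda z = 1%R) ?mulr1; last by rewrite /lambda killed_occupation_z.
congr (_ + _)%:E; rewrite !mxE (big_nth z) big_mkord; apply: eq_bigr => i _.
by rewrite !mxE mulrC.
Qed.

Local Notation kappa1 := (fine (kappa P A z (fun=> 1%R))).

Lemma kappa1E : kappa1 = (\sum_(x <- A) lambda x)%R.
Proof. by rewrite kappa_lambda//=; under eq_bigr do rewrite mul1r. Qed.

Lemma kappa1_ge1 : (1 <= kappa1)%R.
Proof.
rewrite kappa1E big_Aprime /lambda killed_occupation_z lerDl sumr_ge0// => x _.
exact: lambda_ge0.
Qed.

Lemma pistarE x : pistar P A z x = ((if x \in A then lambda x else 0) / kappa1)%R.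
Proof.
rewrite /pistar /pitilde kappa_lambda//=; congr (_ / _)%R.
case: ifPn => xA.
  rewrite (bigD1_seq x)//= eqxx mul1r big1 ?addr0// => y /negbTE ->.
  by rewrite mul0r.
rewrite big_seq big1// => y yA; case: eqP => [yx|]; last by rewrite mul0r.
by move: xA; rewrite -yx yA.
Qed.

Lemma pistar_ge0 x : (0 <= pistar P A z x)%R.
Proof.
rewrite pistarE divr_ge0 ?(le_trans ler01 kappa1_ge1)//.
by case: ifP; rewrite ?lambda_ge0.
Qed.

Lemma esum_pistar (f : S -> R) : (forall x, 0 <= f x)%R ->
  \esum_(x in [set: S]) (pistar P A z x * f x)%:E = (pitilde P A z f)%:E.
Proof.
move=> f0; rewrite (esum_seq A_uniq) => [|x xA|x]; first last.
- by rewrite lee_fin mulr_ge0 ?pistar_ge0.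
- by rewrite pistarE (negbTE xA) mul0r mul0r.
rewrite /pitilde kappa_lambda// sumEFin mulr_suml big_seq [in RHS]big_seq.
by congr EFin; apply: eq_bigr => x xA; rewrite pistarE xA mulrAC (mulrC (lambda x)).
Qed.

Lemma ssum_pistar (f : S -> R) :
  ssum (fun x => pistar P A z x * f x)%R =
  ((fine (kappa P A z f^\+%R) - fine (kappa P A z f^\-%R)) / kappa1)%R%:E.
Proof.
rewrite (ssum_ge0M _ pistar_ge0) (esum_pistar (funrpos_ge0 f)).
by rewrite (esum_pistar (funrneg_ge0 f)) -EFinB mulrBl.
Qed.

Section stationary.
Variable pi : S -> R.
Hypothesis pi_ge0 : forall x, (0 <= pi x)%R.
Hypothesis pi_sum1 : \esum_(x in [set: S]) (pi x)%:E = 1.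
Hypothesis pi_invariant :
  forall y, (pi y)%:E = \esum_(x in [set: S]) (pi x * P x y)%:E.
Hypothesis irr : irreducible P.

Lemma pi_subinvariant x y : (pi x * P x y <= pi y)%R.
Proof.
rewrite -lee_fin pi_invariant.
apply: (esum_ge_term (a := fun w => (pi w * P w y)%:E)) => //.
by move=> w _; rewrite lee_fin mulr_ge0.
Qed.

Lemma pi_gt0 x : (0 < pi x)%R.
Proof.
have [[y pi_y]|pi_eq0] := pselect (exists y, (0 < pi y)%R).
  exact: irreducible_subinvariant_gt0 irr pi_subinvariant pi_y.
have : \esum_(y in [set: S]) (pi y)%:E = 0.
  apply: esum1 => y _; congr EFin; apply/eqP; rewrite eq_le pi_ge0 andbT leNgt.
  by apply/negP => pi_y; apply: pi_eq0; exists y.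
by rewrite pi_sum1 => /eqP; rewrite eqe oner_eq0.
Qed.

Lemma pi_ge_occupation y : (pi z)%:E * occupation y <= (pi y)%:E.
Proof.
have partial_le N : (pi z)%:E * \sum_(0 <= n < N) tb n y <= (pi y)%:E.
  elim: N y => [|N IH] y; first by rewrite big_geq// mule0 lee_fin.
  have [->|yz] := eqVneq y z.
    rewrite big_nat_recl// big1 => [|i _]; last exact: taboo_Sz.
    by rewrite adde0 /= eqxx mule1.
  rewrite big_nat_recl// [tb 0 y]/= (negbTE yz) add0e.
  rewrite (eq_bigr (fun i => \esum_(w in [set: S]) (tb i w * (P w y)%:E))); last first.
    by move=> i _; rewrite taboo_S.
  rewrite -esum_sum; last by move=> w i _ _; exact: tabooP_ge0.
  rewrite -esumZl ?lee_fin//; last first.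
    by move=> w _; rewrite sume_ge0// => i _; exact: tabooP_ge0.
  rewrite [X in _ <= X]pi_invariant; apply: le_esum => w _.
  rewrite -ge0_sume_distrl; last by move=> i _; exact: taboo_ge0.
  by rewrite muleA EFinM lee_wpmul2r ?lee_fin.
rewrite /occupation -nneseriesZl; last by move=> n _; exact: taboo_ge0.
apply: nneseries_le_ub; first by move=> n; rewrite mule_ge0 ?taboo_ge0 ?lee_fin.
by move=> N; rewrite -ge0_sume_distrr// => n _; exact: taboo_ge0.
Qed.

Lemma occupation_fin y : occupation y \is a fin_num.
Proof.
rewrite ge0_fin_numE ?occupation_ge0// ltNge; apply/negP => occ_oo.
have := pi_ge_occupation y; rewrite (_ : occupation y = +oo); last first.
  by apply/eqP; rewrite eq_le leey.
by rewrite muleC gt0_mulye ?lte_fin ?pi_gt0// leNgt ltry.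
Qed.

Let defect y := (pi y - pi z * fine (occupation y))%R.

Lemma defect_ge0 y : (0 <= defect y)%R.
Proof.
by rewrite subr_ge0 -lee_fin EFinM fineK ?occupation_fin// pi_ge_occupation.
Qed.

Lemma defect_subinvariant x y : (defect x * P x y <= defect y)%R.
Proof.
have pi_split : (pi y)%:E = \esum_(w in [set: S]) (defect w * P w y)%:E +
    (pi z)%:E * \esum_(w in [set: S]) (occupation w * (P w y)%:E).
  rewrite -esumZl ?lee_fin//; last first.
    by move=> w _; rewrite mule_ge0 ?occupation_ge0 ?lee_fin.
  rewrite -esumD; last 2 first.
  - by move=> w _; rewrite lee_fin mulr_ge0 ?defect_ge0.
  - by move=> w _; rewrite !mule_ge0 ?occupation_ge0 ?lee_fin.
  rewrite pi_invariant; apply: eq_esum => w _.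
  by rewrite -(fineK (occupation_fin w)) -!EFinM -EFinD /defect; congr EFin; ring.
have : (defect x * P x y)%:E + (pi z)%:E * occupation y <= (pi y)%:E.
  rewrite pi_split leeD//.
    apply: (esum_ge_term (a := fun w => (defect w * P w y)%:E)) => //.
    by move=> w _; rewrite lee_fin mulr_ge0 ?defect_ge0.
  by rewrite lee_wpmul2l ?lee_fin// occupation_le_esumP.
by rewrite -(fineK (occupation_fin y)) -EFinM -EFinD lee_fin /defect lerBrDr.
Qed.

Lemma stationary_occupation x : (pi x)%:E = (pi z)%:E * occupation x.
Proof.
have defect_z : defect z = 0%R by rewrite /defect occupation_z /= mulr1 subrr.
have : defect x = 0%R.
  apply/eqP; rewrite eq_le defect_ge0 andbT leNgt; apply/negP => defect_x.
  have := irreducible_subinvariant_gt0 (y := z) irr defect_subinvariant defect_x.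
  by rewrite defect_z ltxx.
by move/eqP; rewrite subr_eq0 => /eqP ->; rewrite EFinM fineK ?occupation_fin.
Qed.

Lemma pi_mean_return : (pi z)%:E * mean_return_time P z = 1.
Proof.
rewrite -esum_occupation -esumZl ?lee_fin//; last by move=> y _; exact: occupation_ge0.
by rewrite -pi_sum1; apply: eq_esum => y _; rewrite [RHS]stationary_occupation.
Qed.

Lemma esum_stationary (g : S -> R) : (forall x, 0 <= g x)%R ->
  \esum_(x in [set: S]) (pi x * g x)%:E =
  (pi z)%:E * \esum_(x in [set: S]) (occupation x * (g x)%:E).
Proof.
move=> g0; rewrite -esumZl ?lee_fin//; last first.
  by move=> x _; rewrite mule_ge0 ?occupation_ge0 ?lee_fin.
by apply: eq_esum => x _; rewrite EFinM [(pi x)%:E]stationary_occupation muleA.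
Qed.

Lemma esum_stationary_split (f : S -> R) : (forall x, 0 <= f x)%R ->
  \esum_(x in [set: S]) (pi x * f x)%:E =
  (pi z)%:E * (kappa P A z f + escaped_visits f).
Proof. by move=> f0; rewrite esum_stationary// esum_occupation_split. Qed.

Lemma escaped_visits1_fin : escaped_visits (fun=> 1%R) \is a fin_num.
Proof.
rewrite ge0_fin_numE ?(escaped_visits_ge0 (fun _ => ler01))//.
apply: le_lt_trans finite_return; rewrite mean_return_split leeDr//.
by rewrite kappa_lambda// lee_fin sumr_ge0// => x _; rewrite mul1r lambda_ge0.
Qed.

Lemma pi_z_inv : pi z = (kappa1 + fine (escaped_visits (fun=> 1%R)))^-1%R.
Proof.
have kappa1_EFin : kappa P A z (fun=> 1%R) = kappa1%:E by rewrite kappa_lambda.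
have pi_mean : (pi z * (kappa1 + fine (escaped_visits (fun=> 1%R))) = 1)%R.
  apply: EFin_inj; rewrite EFinM EFinD (fineK escaped_visits1_fin) -kappa1_EFin.
  by rewrite -mean_return_split pi_mean_return.
have kd_neq0 : (kappa1 + fine (escaped_visits (fun=> 1%R)) != 0)%R.
  rewrite gt_eqF// ltr_wpDr ?(lt_le_trans ltr01 kappa1_ge1)// fine_ge0//.
  exact: (escaped_visits_ge0 (fun _ => ler01)).
by apply: (mulfI kd_neq0); rewrite mulrC pi_mean mulfV.
Qed.

Local Notation escaped1 := (fine (escaped_visits (fun=> 1%R))).

Lemma ssum_stationary (f : S -> R) :
  escaped_visits f^\+%R \is a fin_num -> escaped_visits f^\-%R \is a fin_num ->
  ssum (fun x => pi x * f x)%R =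
  (((fine (kappa P A z f^\+%R) - fine (kappa P A z f^\-%R)) +
    (fine (escaped_visits f^\+%R) - fine (escaped_visits f^\-%R))) /
   (kappa1 + escaped1))%R%:E.
Proof.
move=> fp_fin fm_fin; rewrite (ssum_ge0M _ pi_ge0).
rewrite (esum_stationary_split (funrpos_ge0 f)) (esum_stationary_split (funrneg_ge0 f)).
rewrite (kappa_lambda (fun x _ => funrpos_ge0 f x)).
rewrite (kappa_lambda (fun x _ => funrneg_ge0 f x)).
rewrite -(fineK fp_fin) -(fineK fm_fin) pi_z_inv -!EFinD /=.
by congr EFin; ring.
Qed.

Lemma pistar_pi_gap (r f : S -> R) (B1 B2 : R) :
  (forall x, `|f x| <= r x)%R ->
  escaped_visits r <= B1%:E -> escaped_visits (fun=> 1%R) <= B2%:E ->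
  `|ssum (fun x => pistar P A z x * f x)%R - ssum (fun x => pi x * f x)%R|
  <= (2 * Num.max (B1 / kappa1) (pitilde P A z r * (B2 / kappa1)))%R%:E.
Proof.
move=> f_le_r esc_r esc_1.
have f_parts_le x : (f^\+%R x + f^\-%R x <= r x)%R.
  by have := congr1 (fun F => F x) (funrposDneg f); rewrite !fctE /= => ->.
have esc_parts : escaped_visits f^\+%R + escaped_visits f^\-%R <= B1%:E.
  rewrite -escaped_visitsD => [|x|x]; [|exact: funrpos_ge0|exact: funrneg_ge0].
  apply: le_trans esc_r; apply: le_escaped_visits => // x.
  by rewrite addr_ge0 ?funrpos_ge0 ?funrneg_ge0.
have esc_fin g : (forall x, 0 <= g x)%R -> escaped_visits g <= B1%:E ->
    escaped_visits g \is a fin_num.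
  move=> g0 gB1; rewrite ge0_fin_numE ?escaped_visits_ge0//.
  by rewrite (le_lt_trans gB1) ?ltry.
have fp_fin : escaped_visits f^\+%R \is a fin_num.
  apply: esc_fin => [x|]; first exact: funrpos_ge0.
  apply: le_trans esc_parts.
  by rewrite leeDl// escaped_visits_ge0// => x; exact: funrneg_ge0.
have fm_fin : escaped_visits f^\-%R \is a fin_num.
  apply: esc_fin => [x|]; first exact: funrneg_ge0.
  apply: le_trans esc_parts.
  by rewrite leeDr// escaped_visits_ge0// => x; exact: funrpos_ge0.
rewrite ssum_pistar ssum_stationary// -EFinB abse_EFin lee_fin /pitilde.
apply: perturbed_ratio_bound.
- exact: lt_le_trans ltr01 kappa1_ge1.
- by rewrite fine_ge0// escaped_visits_ge0.
- by rewrite -lee_fin fineK ?escaped_visits1_fin.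
- have r_ge0 x : (0 <= r x)%R := le_trans (normr_ge0 _) (f_le_r x).
  rewrite (kappa_lambda (fun x _ => funrpos_ge0 f x)).
  rewrite (kappa_lambda (fun x _ => funrneg_ge0 f x)).
  rewrite (kappa_lambda (fun x _ => r_ge0 x)) /=.
  apply: le_trans (ler_normB _ _) _.
  rewrite !ger0_norm ?sumr_ge0// => [|x _|x _]; first last.
  + by rewrite mulr_ge0 ?funrneg_ge0 ?lambda_ge0.
  + by rewrite mulr_ge0 ?funrpos_ge0 ?lambda_ge0.
  rewrite -big_split /=; apply: ler_sum => x _.
  by rewrite -mulrDl ler_wpM2r ?lambda_ge0.
- have Ep_ge0 := fine_ge0 (escaped_visits_ge0 (funrpos_ge0 f)).
  have Em_ge0 := fine_ge0 (escaped_visits_ge0 (funrneg_ge0 f)).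
  apply: le_trans (ler_normB _ _) _; rewrite !ger0_norm//.
  by rewrite -lee_fin EFinD !fineK.
Qed.

End stationary.

End exit.

End excursion.

Theorem theorem4p1 (R : realType) (S : countType)
  (P : S -> S -> R) (pi : S -> R) (z : S) (A : seq S)
  (r g1 g2 h1 h2 : S -> R) :
  stochastic P -> irreducible P -> positive_recurrent P ->
  stationary P pi ->
  uniq A -> z \in A ->
  (1%:M - P22 P A z) \in unitmx ->
  (forall x, 0 <= r x) ->
  (forall x, x != z -> 0 <= g1 x) ->
  (forall x, x != z -> 0 <= g2 x) ->
  (forall x, x \in A -> 0 <= h1 x) ->
  (forall x, x \in A -> 0 <= h2 x) ->
  (forall x, x != z ->
     (\esum_(y in [set y | y != z]) (P x y * g1 y)%:E <= (g1 x - r x)%:E)%E) ->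
  (forall x, x != z ->
     (\esum_(y in [set y | y != z]) (P x y * g2 y)%:E <= (g2 x - 1)%:E)%E) ->
  (forall x, x \in A ->
     (\esum_(y in [set y | y \notin A]) (P x y * g1 y)%:E <= (h1 x)%:E)%E) ->
  (forall x, x \in A ->
     (\esum_(y in [set y | y \notin A]) (P x y * g2 y)%:E <= (h2 x)%:E)%E) ->
  (rnorm (pistar P A z) pi r <=
    (2 * Num.max (beta P A z h1 / fine (kappa P A z (fun _ => 1)))
                 (pitilde P A z r * (beta P A z h2 / fine (kappa P A z (fun _ => 1)))))%:E)%E.
Proof.
move=> [P_ge0 P_sum1] irr pos_rec [pi_ge0 [pi_sum1 pi_inv]] A_uniq zA IP22_unit
  r_ge0 g1_ge0 g2_ge0 h1_ge0 h2_ge0 drift1 drift2 exit1 exit2.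
have finite_return := pos_rec z.
have escaped_r : (escaped_visits P z A r <= (beta P A z h1)%:E)%E.
  rewrite -(kappa_beta P_ge0 finite_return A_uniq zA IP22_unit h1_ge0).
  exact: (escaped_visits_le P_ge0 zA g1_ge0 r_ge0 h1_ge0 drift1 exit1).
have escaped_1 : (escaped_visits P z A (fun=> 1%R) <= (beta P A z h2)%:E)%E.
  rewrite -(kappa_beta P_ge0 finite_return A_uniq zA IP22_unit h2_ge0).
  exact: (escaped_visits_le P_ge0 zA g2_ge0 (fun=> ler01) h2_ge0 drift2 exit2).
apply: ge_ereal_sup => _ [f /= f_le_r <-].
exact: (pistar_pi_gap P_ge0 P_sum1 finite_return A_uniq zA
  pi_ge0 pi_sum1 pi_inv irr f_le_r escaped_r escaped_1).
Qed.
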